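(* Let $R$ and $S$ be two non-crossing geometric trees in the plane (vertices in general position) whose convex hulls intersect. Then either the convex hull of one of them lies strictly inside the convex hull of the other, or there exist two adjacent vertices on the convex hull of one of the trees whose visibility is blocked by the other tree (i.e., the segment joining them intersects the other tree).
   Context: A geometric tree is a plane straight-line embedding of a tree in $\mathbb{R}^2$, viewed as a subset of $\mathbb{R}^2$; two trees are non-crossing if they are disjoint as point sets. *)

From HB Require Import structures.
From mathcomp Require Import all_boot all_order all_algebra.
From mathcomp Require Import reals.
Set Implicit Arguments. Unset Strict Implicit. Unset Printing Implicit Defensive.
Import Order.TTheory GRing.Theory Num.Theory.
Local Open Scope ring_scope.

Section Geo.
Variable R : realType.
Definition point := (R * R)%type.

Definition in_seg (a b p : point) : Prop :=
  exists t : R, 0 <= t <= 1 /\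
    p = ((1 - t) * a.1 + t * b.1, (1 - t) * a.2 + t * b.2).

Definition orient (a b c : point) : R :=
  (b.1 - a.1) * (c.2 - a.2) - (b.2 - a.2) * (c.1 - a.1).

Definition collinear (a b c : point) : Prop := orient a b c = 0.

Definition general_position (I : finType) (f : I -> point) : Prop :=
  forall i j k : I, i != j -> j != k -> i != k -> ~ collinear (f i) (f j) (f k).

Definition in_hull (V : finType) (pos : V -> point) (p : point) : Prop :=
  exists l : V -> R, (forall v, 0 <= l v) /\ \sum_(v : V) l v = 1 /\
    p = (\sum_(v : V) l v * (pos v).1, \sum_(v : V) l v * (pos v).2).

Definition in_interior (A : point -> Prop) (p : point) : Prop :=
  exists eps : R, 0 < eps /\
    forall q : point, (q.1 - p.1) ^+ 2 + (q.2 - p.2) ^+ 2 < eps -> A q.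

(* A geometric tree: vertex set V (finite, nonempty), injective placement pos,
   a simple graph e which is a tree (connected and acyclic), drawn with
   straight-line edges forming a plane embedding. *)
Definition geom_tree (V : finType) (pos : V -> point) (e : rel V) : Prop :=
  [/\ (0 < #|V|)%N, injective pos, symmetric e & irreflexive e] /\
  [/\ (forall x y : V, connect e x y),
      (forall c : seq V, (2 < size c)%N -> ~~ ucycleb e c),
      (forall u v w : V, e u v -> in_seg (pos u) (pos v) (pos w) -> w = u \/ w = v) &
      (forall u v x y : V, e u v -> e x y -> ~ ([set u; v] = [set x; y]) ->
         forall p, in_seg (pos u) (pos v) p -> in_seg (pos x) (pos y) p ->
           exists w : V, [/\ (w == u) || (w == v), (w == x) || (w == y) & p = pos w])].

Definition in_tree (V : finType) (pos : V -> point) (e : rel V) (p : point) : Prop :=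
  (exists v : V, p = pos v) \/
  (exists u v : V, e u v /\ in_seg (pos u) (pos v) p).

(* u and v are adjacent vertices on the convex hull of the point family pos:
   [pos u, pos v] is an edge of the hull polygon, i.e. all other points lie
   strictly on one side of the line through pos u and pos v. *)
Definition hull_adjacent (V : finType) (pos : V -> point) (u v : V) : Prop :=
  u != v /\
  ((forall w : V, w != u -> w != v -> 0 < orient (pos u) (pos v) (pos w)) \/
   (forall w : V, w != u -> w != v -> orient (pos u) (pos v) (pos w) < 0)).

Definition join_pos (V W : finType) (f : V -> point) (g : W -> point)
  (x : (V + W)%type) : point :=
  match x with inl v => f v | inr w => g w end.

End Geo.

From HB Require Import structures.
From mathcomp Require Import all_boot all_order all_algebra.
From mathcomp Require Import reals ring lra.
From Stdlib Require Import ClassicalEpsilon Classical.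
Import Order.TTheory GRing.Theory Num.Theory.
Local Open Scope ring_scope.
Set Implicit Arguments. Unset Strict Implicit. Unset Printing Implicit Defensive.

(* Write H(T) for the convex hull of the vertices of a tree T.  A segment from a
   vertex inside H(R) to a vertex outside it crosses an edge of the hull polygon
   of R: among its crossings with segments between vertices of R take the last
   one; if that segment were not a hull edge, a vertex of R beyond it would give
   a later crossing.  So if no tree blocks a hull edge of the other, no edge of S
   leaves H(R), and by connectedness either all vertices of S lie in H(R) --
   whence, by general position, H(S) lies in the interior of H(R) -- or none
   does; symmetrically for R.  In the remaining case the hulls meet although no
   vertex lies in the other hull.  Then some segment between vertices of R
   crosses a hull edge cd of S, which is in turn crossed by a hull edge ab of R;
   the path of R from a to b crosses the line cd at a point of H(R), and as H(R)
   meets cd but contains neither c nor d, that point lies on cd. *)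

(** * Orientation and segments *)

Section PlaneGeometry.
Variable R : realType.
Implicit Types a b c p q x y : point R.

Definition lerp a b (t : R) : point R := ((1 - t) * a.1 + t * b.1, (1 - t) * a.2 + t * b.2).

Definition dotp p a b : R := (a.1 - p.1) * (b.1 - p.1) + (a.2 - p.2) * (b.2 - p.2).

Lemma orient_rotl a b c : orient a b c = orient b c a.
Proof. rewrite /orient; ring. Qed.

Lemma orient_swap a b c : orient a b c = - orient b a c.
Proof. rewrite /orient; ring. Qed.

Lemma orient_swapr a b c : orient a b c = - orient a c b.
Proof. rewrite /orient; ring. Qed.

Lemma orient_sum a b c p : orient b c p + orient c a p + orient a b p = orient a b c.
Proof. rewrite /orient; ring. Qed.

Lemma orient_lerp a b p q t :
  orient a b (lerp p q t) = (1 - t) * orient a b p + t * orient a b q.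
Proof. rewrite /orient /lerp /=; ring. Qed.

Lemma orient_aa a p : orient a a p = 0.
Proof. rewrite /orient; ring. Qed.

Lemma orient_refl_l a b : orient a b a = 0.
Proof. rewrite /orient; ring. Qed.

Lemma orient_refl_r a b : orient a b b = 0.
Proof. rewrite /orient; ring. Qed.

Lemma orient_affine a b p : orient a b p =
  ((b.2 - a.2) * a.1 - (b.1 - a.1) * a.2) + (-(b.2 - a.2)) * p.1 + (b.1 - a.1) * p.2.
Proof. rewrite /orient; ring. Qed.

Lemma orient_bary1 a b c x :
  orient a b c * x.1 = orient b c x * a.1 + orient c a x * b.1 + orient a b x * c.1.
Proof. rewrite /orient; ring. Qed.

Lemma orient_bary2 a b c x :
  orient a b c * x.2 = orient b c x * a.2 + orient c a x * b.2 + orient a b x * c.2.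
Proof. rewrite /orient; ring. Qed.

Lemma lerp_lerp p q s r : lerp (lerp p q s) q r = lerp p q (s + r * (1 - s)).
Proof. rewrite /lerp /=; congr (_,_); ring. Qed.

Lemma lerp0 p q : lerp p q 0 = p.
Proof. case: p => ? ?; rewrite /lerp /=; congr (_,_); ring. Qed.

Lemma lerp1 p q : lerp p q 1 = q.
Proof. case: q => ? ?; rewrite /lerp /=; congr (_,_); ring. Qed.

Lemma lerpC p q t : lerp p q t = lerp q p (1 - t).
Proof. rewrite /lerp /=; congr (_,_); ring. Qed.

Lemma in_seg_lerp a b t : 0 <= t <= 1 -> in_seg a b (lerp a b t).
Proof. by exists t. Qed.

Lemma in_segC a b p : in_seg a b p -> in_seg b a p.
Proof.
case=> t [/andP [t0 t1] ->]; rewrite -/(lerp a b t) lerpC.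
by apply: in_seg_lerp; apply/andP; split; lra.
Qed.

Lemma in_seg_orient0 a b p : in_seg a b p -> orient a b p = 0.
Proof. by case=> t [_ ->]; rewrite /orient /=; ring. Qed.

Lemma in_seg_same a p : in_seg a a p -> p = a.
Proof. by case=> t [_ ->]; rewrite [a in RHS]surjective_pairing; congr (_,_); ring. Qed.

Lemma neq0_lt0_gt0 (x : R) : x != 0 -> x < 0 \/ 0 < x.
Proof. by rewrite neq_lt => /orP. Qed.

Lemma in_seg_of_orient a b c x : 0 < orient a b c -> orient b c x = 0 ->
  0 <= orient c a x -> 0 <= orient a b x -> in_seg b c x.
Proof.
move=> HD Ha Hb Hc.
have Hs := orient_sum a b c x; have H1 := orient_bary1 a b c x.
have H2 := orient_bary2 a b c x.
move: HD Ha Hb Hc Hs H1 H2.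
set D := orient a b c; set al := orient b c x; set be := orient c a x.
set ga := orient a b x; clearbody D al be ga => HD -> Hb Hc Hs H1 H2.
have DN : D != 0 by rewrite gt_eqF.
exists (ga / D); split.
  apply/andP; split; first by apply: divr_ge0 => //; apply: ltW.
  by rewrite ler_pdivrMr // mul1r -Hs add0r lerDr.
case: x H1 H2 => x1 x2 /= H1 H2.
have -> : x1 = (0 * a.1 + be * b.1 + ga * c.1) / D by rewrite -H1 mulrAC divff // mul1r.
have -> : x2 = (0 * a.2 + be * b.2 + ga * c.2) / D by rewrite -H2 mulrAC divff // mul1r.
by rewrite -Hs add0r in DN *; rewrite /lerp /=; congr (_,_); field.
Qed.

(* [x] in the open triangle [abc] is reached from [a] along [ab], then towards [c]. *)
Lemma inside_tri_lerp a b c x :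
  0 < orient b c x -> 0 < orient c a x -> 0 < orient a b x ->
  x = lerp (lerp a b (orient c a x / (orient b c x + orient c a x))) c
           (orient a b x / orient a b c).
Proof.
move=> Ha Hb Hc.
have Hs := orient_sum a b c x; have H1 := orient_bary1 a b c x.
have H2 := orient_bary2 a b c x.
move: Ha Hb Hc Hs H1 H2.
set D := orient a b c; set al := orient b c x; set be := orient c a x.
set ga := orient a b x; clearbody D al be ga => Ha Hb Hc Hs H1 H2.
have DN : D != 0 by rewrite -Hs gt_eqF // !addr_gt0.
have AB : al + be != 0 by rewrite gt_eqF // !addr_gt0.
case: x H1 H2 => x1 x2 /= H1 H2.
have -> : x1 = (al * a.1 + be * b.1 + ga * c.1) / D by rewrite -H1 mulrAC divff // mul1r.
have -> : x2 = (al * a.2 + be * b.2 + ga * c.2) / D by rewrite -H2 mulrAC divff // mul1r.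
by rewrite -Hs in DN *; rewrite /lerp /=; congr (_,_); field; rewrite ?AB ?DN.
Qed.

Lemma orient_gt0_near a b x : 0 < orient a b x -> exists e : R, 0 < e /\
  forall q, (q.1 - x.1) ^+ 2 + (q.2 - x.2) ^+ 2 < e -> 0 < orient a b q.
Proof.
move=> Ho.
set o := orient a b x; set L := (b.1 - a.1) ^+ 2 + (b.2 - a.2) ^+ 2.
have L0 : 0 <= L by rewrite /L addr_ge0 // sqr_ge0.
have L1 : 0 < 1 + L by lra.
exists (o ^+ 2 / (1 + L)); split; first by apply: divr_gt0 => //; apply: exprn_gt0.
move=> q Hq.
set d := (q.1 - x.1) ^+ 2 + (q.2 - x.2) ^+ 2 in Hq.
set lin := (b.1 - a.1) * (q.2 - x.2) - (b.2 - a.2) * (q.1 - x.1).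
have -> : orient a b q = o + lin by rewrite /o /lin /orient; ring.
(* Cauchy-Schwarz: [lin^2 <= L d] *)
have CS : lin ^+ 2 <= L * d.
  have -> : lin ^+ 2 =
      L * d - ((b.1 - a.1) * (q.1 - x.1) + (b.2 - a.2) * (q.2 - x.2)) ^+ 2.
    by rewrite /lin /L /d; ring.
  by rewrite lerBlDr lerDl sqr_ge0.
have d0 : 0 <= d by rewrite /d addr_ge0 // sqr_ge0.
have Hd : (1 + L) * d < o ^+ 2 by rewrite mulrC -ltr_pdivlMr // ltr_pwDl.
have : lin ^+ 2 < o ^+ 2.
  by apply: (le_lt_trans CS); apply: le_lt_trans Hd; apply: ler_wpM2r => //; rewrite lerDr.
by move: Ho; rewrite -/o; clearbody o lin => Ho H; case: (lerP 0 lin) => h; nra.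
Qed.

Lemma inside_tri_near a b c x :
  0 < orient b c x -> 0 < orient c a x -> 0 < orient a b x ->
  exists e : R, 0 < e /\ forall q, (q.1 - x.1) ^+ 2 + (q.2 - x.2) ^+ 2 < e ->
    [/\ 0 < orient b c q, 0 < orient c a q & 0 < orient a b q].
Proof.
move=> /orient_gt0_near [e1 [e10 H1]] /orient_gt0_near [e2 [e20 H2]].
move=> /orient_gt0_near [e3 [e30 H3]].
exists (Order.min e1 (Order.min e2 e3)); split; first by rewrite !lt_min e10 e20 e30.
by move=> q; rewrite !lt_min => /and3P [/H1 ? /H2 ? /H3 ?].
Qed.

Lemma sign_change_param (B0 B1 C0 C1 : R) : 0 < B0 -> B1 < 0 -> 0 < C0 ->
  (0 <= C1 \/ B0 / (B0 - B1) <= C0 / (C0 - C1)) ->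
  [/\ 0 < B0 / (B0 - B1) < 1, (1 - B0 / (B0 - B1)) * B0 + B0 / (B0 - B1) * B1 = 0 &
     0 <= (1 - B0 / (B0 - B1)) * C0 + B0 / (B0 - B1) * C1].
Proof.
move=> HB0 HB1 HC0 HC.
have BP : 0 < B0 - B1 by rewrite subr_gt0; apply: lt_trans HB1 HB0.
have Hs : B0 / (B0 - B1) * (B0 - B1) = B0 by rewrite divfK // gt_eqF.
move: Hs HC; set s := B0 / (B0 - B1) => Hs HC.
have s0 : 0 < s by rewrite /s divr_gt0.
have s1 : s < 1 by rewrite /s ltr_pdivrMr // mul1r; lra.
split; first by rewrite s0 s1.
  have -> : (1 - s) * B0 + s * B1 = B0 - s * (B0 - B1) by ring.
  by rewrite Hs subrr.
case: HC => HC; first by clearbody s; nra.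
case: (lerP 0 C1) => HC1; first by clearbody s; nra.
have CP : 0 < C0 - C1 by rewrite subr_gt0; apply: lt_trans HC1 HC0.
have Ht : C0 / (C0 - C1) * (C0 - C1) = C0 by rewrite divfK // gt_eqF.
move: Ht HC; set u := C0 / (C0 - C1) => Ht HC; clearbody s u.
have -> : (1 - s) * C0 + s * C1 = C0 - s * (C0 - C1) by ring.
rewrite -[X in X - _]Ht -mulrBl; apply: mulr_ge0; lra.
Qed.

(* [P1] lies strictly on the inner side of [ab], so the exit is through [bc] or [ca]. *)
Lemma exit_tri_two_sides a b c P0 P1 : 0 < orient a b c ->
  0 <= orient a b P0 -> 0 < orient b c P0 -> 0 < orient c a P0 ->
  0 < orient a b P1 -> orient b c P1 < 0 \/ orient c a P1 < 0 ->
  exists s : R, 0 < s <= 1 /\ (in_seg b c (lerp P0 P1 s) \/ in_seg c a (lerp P0 P1 s)).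
Proof.
move=> HD HA0 HB0 HC0 HA1 H1.
have HAs (s : R) : 0 <= s <= 1 -> 0 <= orient a b (lerp P0 P1 s).
  move=> /andP [s0 s1]; rewrite orient_lerp.
  by apply: addr_ge0; apply: mulr_ge0 => //; lra.
set sB := orient b c P0 / (orient b c P0 - orient b c P1).
set sC := orient c a P0 / (orient c a P0 - orient c a P1).
case: (boolP ((orient b c P1 < 0) && ((0 <= orient c a P1) || (sB <= sC)))).
  move=> /andP [HB1 HC]; have [/andP [s0 s1] E F] := sign_change_param HB0 HB1 HC0 (orP HC).
  exists sB; split; first by rewrite s0 ltW.
  have Hs01 : 0 <= sB <= 1 by rewrite !ltW.
  by left; apply: in_seg_of_orient HD _ _ (HAs _ Hs01); rewrite orient_lerp.
move=> HN.
have [HC1 HB] : orient c a P1 < 0 /\ (0 <= orient b c P1 \/ sC <= sB).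
  move: HN; rewrite negb_and negb_or -!ltNge; case/orP => [HB1|/andP [HC1 HH]].
    by case: H1 => H1; [rewrite H1 in HB1 | split => //; left; rewrite -leNgt in HB1].
  by split => //; right; apply: ltW.
have [/andP [s0 s1] E F] := sign_change_param HC0 HC1 HB0 HB.
exists sC; split; first by rewrite s0 ltW.
have Hs01 : 0 <= sC <= 1 by rewrite !ltW.
right; apply: (@in_seg_of_orient b c a).
- by rewrite -orient_rotl.
- by rewrite orient_lerp.
- exact: HAs.
- by rewrite orient_lerp.
Qed.

Lemma exit_triangle a b c P0 P1 :
  0 < orient b c P0 -> 0 < orient c a P0 -> 0 < orient a b P0 ->
  ~ [/\ 0 < orient b c P1, 0 < orient c a P1 & 0 < orient a b P1] ->
  orient b c P1 != 0 -> orient c a P1 != 0 -> orient a b P1 != 0 ->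
  exists s : R, 0 < s <= 1 /\ [\/ in_seg a b (lerp P0 P1 s),
    in_seg b c (lerp P0 P1 s) | in_seg c a (lerp P0 P1 s)].
Proof.
move=> H1 H2 H3 HN /neq0_lt0_gt0 N1 /neq0_lt0_gt0 N2 /neq0_lt0_gt0 N3.
have HD : 0 < orient a b c by have := orient_sum a b c P0; lra.
have HD1 : 0 < orient b c a by rewrite -orient_rotl.
have HD2 : 0 < orient c a b by rewrite -2!orient_rotl.
case: N3 => [S3|S3].
  case: N1 => [S1|S1].
    case: N2 => [S2|S2]; first by have := orient_sum a b c P1; lra.
    have [s [Hs [?|?]]] := exit_tri_two_sides HD2 (ltW H2) H3 H1 S2 (or_intror S1).
    - by exists s; split => //; constructor 1.
    - by exists s; split => //; constructor 2.
  have [s [Hs [?|?]]] := exit_tri_two_sides HD1 (ltW H1) H2 H3 S1 (or_intror S3).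
  - by exists s; split => //; constructor 3.
  - by exists s; split => //; constructor 1.
have HN' : orient b c P1 < 0 \/ orient c a P1 < 0.
  by case: N1 => [|S1]; [left | case: N2 => [|S2]; [right | case: HN]].
have [s [Hs [?|?]]] := exit_tri_two_sides HD (ltW H3) H1 H2 S3 HN'.
- by exists s; split => //; constructor 2.
- by exists s; split => //; constructor 3.
Qed.

Lemma crossing_param a b q1 q2 (s : R) : orient a b q1 != 0 ->
  in_seg a b (lerp q1 q2 s) -> s = orient a b q1 / (orient a b q1 - orient a b q2).
Proof.
move=> N /in_seg_orient0; rewrite orient_lerp.
move: N; set g0 := orient a b q1; set g1 := orient a b q2; clearbody g0 g1 => N E.
have N2 : g0 - g1 != 0.
  apply: contraNneq N => E2; apply/eqP; rewrite -E.
  have -> : g1 = g0 by apply/eqP; rewrite eq_sym -subr_eq0 E2.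
  ring.
apply: (mulIf N2); rewrite divfK //.
have : s * (g0 - g1) - g0 = - ((1 - s) * g0 + s * g1) by ring.
by rewrite E oppr0 => /eqP; rewrite subr_eq0 => /eqP.
Qed.

Lemma cross_beyond_side a b c q1 q2 (s : R) :
  0 < orient a b c -> 0 < orient a b q2 -> 0 <= s <= 1 ->
  in_seg a b (lerp q1 q2 s) -> orient q1 q2 a != 0 -> orient q1 q2 b != 0 ->
  ~ [/\ 0 < orient b c q2, 0 < orient c a q2 & 0 < orient a b q2] ->
  orient b c q2 != 0 -> orient c a q2 != 0 ->
  exists s' : R, s < s' <= 1 /\ (in_seg b c (lerp q1 q2 s') \/ in_seg c a (lerp q1 q2 s')).
Proof.
move=> HD Hq2 /andP [s0 s1] [u [/andP [u0 u1] Ez]] NA NB HN NB2 NC2.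
have Oz : orient q1 q2 (lerp q1 q2 s) = 0.
  by rewrite orient_lerp orient_refl_l orient_refl_r !mulr0 addr0.
rewrite -/(lerp a b u) in Ez; rewrite Ez orient_lerp in Oz.
have u0' : 0 < u.
  rewrite lt_neqAle u0 andbT; apply: contraNneq NA => U.
  by move: Oz; rewrite -U subr0 mul1r mul0r addr0 => ->.
have u1' : u < 1.
  rewrite lt_neqAle u1 andbT; apply: contraNneq NB => U.
  by move: Oz; rewrite U subrr mul0r mul1r add0r => ->.
have HBz : 0 < orient b c (lerp q1 q2 s).
  rewrite Ez orient_lerp orient_refl_l -orient_rotl mulr0 addr0.
  by apply: mulr_gt0 => //; lra.
have HCz : 0 < orient c a (lerp q1 q2 s).
  by rewrite Ez orient_lerp orient_refl_r mulr0 add0r -2!orient_rotl mulr_gt0.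
have HAz : orient a b (lerp q1 q2 s) = 0.
  by rewrite Ez; apply: in_seg_orient0; apply: in_seg_lerp; rewrite u0 u1.
have s1' : s < 1.
  rewrite lt_neqAle s1 andbT; apply/negP => /eqP S.
  by move: HAz; rewrite S lerp1 => E; rewrite E ltxx in Hq2.
have HN' : orient b c q2 < 0 \/ orient c a q2 < 0.
  case: (neq0_lt0_gt0 NB2) => [|S2]; first by left.
  by case: (neq0_lt0_gt0 NC2) => [|S3]; [right | case: HN].
have HAz0 : 0 <= orient a b (lerp q1 q2 s) by rewrite HAz.
have [sg [/andP [sg0 sg1] Hseg]] := exit_tri_two_sides HD HAz0 HBz HCz Hq2 HN'.
exists (s + sg * (1 - s)); rewrite -lerp_lerp; split => //.
apply/andP; split; first by rewrite ltrDl; apply: mulr_gt0 => //; lra.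
by nra.
Qed.

Lemma dotp_gt0 p a : a != p -> 0 < dotp p a a.
Proof.
move=> ap; rewrite lt_neqAle /dotp -!expr2 addr_ge0 ?sqr_ge0 // andbT eq_sym.
rewrite paddr_eq0 ?sqr_ge0 // !sqrf_eq0 !subr_eq0; apply: contra ap => /andP [E1 E2].
by rewrite [a]surjective_pairing [p]surjective_pairing (eqP E1) (eqP E2).
Qed.

Lemma in_seg_of_dotp a b p : orient p a b = 0 -> dotp p a b <= 0 -> in_seg a b p.
Proof.
move=> Hc Hd; have [<-|ap] := eqVneq a p.
  by exists 0; split; [rewrite lexx ler01 | rewrite -/(lerp a b 0) lerp0].
have Hn := dotp_gt0 ap.
have E1 : dotp p a a * (b.1 - p.1) = dotp p a b * (a.1 - p.1) - orient p a b * (a.2 - p.2).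
  by rewrite /dotp /orient; ring.
have E2 : dotp p a a * (b.2 - p.2) = dotp p a b * (a.2 - p.2) + orient p a b * (a.1 - p.1).
  by rewrite /dotp /orient; ring.
rewrite Hc !mul0r subr0 addr0 in E1 E2.
move: Hn Hd E1 E2; set n := dotp p a a; set d := dotp p a b; clearbody n d => Hn Hd E1 E2.
have nd : n - d != 0 by rewrite gt_eqF //; lra.
have nn : n != 0 by rewrite gt_eqF.
exists (n / (n - d)); split.
  apply/andP; split; first by apply: divr_ge0; lra.
  by rewrite ler_pdivrMr ?mul1r; lra.
have -> : b.1 = p.1 + d * (a.1 - p.1) / n by rewrite -E1 mulrAC divff // mul1r; ring.
have -> : b.2 = p.2 + d * (a.2 - p.2) / n by rewrite -E2 mulrAC divff // mul1r; ring.
by rewrite [p in LHS]surjective_pairing; congr (_,_); field; rewrite nn nd.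
Qed.

Lemma connect_sign_change (T : finType) (e : rel T) (f : T -> R) (x y : T) :
  connect e x y -> f x < 0 -> 0 < f y -> (forall v, f v != 0) ->
  exists u v, [/\ e u v, f u < 0 & 0 < f v].
Proof.
move=> /connectP [pth Hp ->] {y} Hx Hy Hn.
elim: pth x Hp Hx Hy => [|z pth IH] x /=; first by move=> _ /lt_trans/[apply]; rewrite ltxx.
move=> /andP [Hxz Hp] Hx Hy.
case: (neq0_lt0_gt0 (Hn z)) => Hz; first exact: (IH z Hp Hz Hy).
by exists x, z.
Qed.

Lemma lerp_opposite_signs (fa fb u : R) : fa != 0 -> fb != 0 -> 0 <= u <= 1 ->
  (1 - u) * fa + u * fb = 0 -> (fa < 0 /\ 0 < fb) \/ (0 < fa /\ fb < 0).
Proof.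
move=> /neq0_lt0_gt0 [] Ha /neq0_lt0_gt0 [] Hb /andP [u0 u1] E; try by [left | right].
- by exfalso; move: E; nra.
- by exfalso; move: E; nra.
Qed.

Lemma exists_maximal (I : finType) (P : I -> Prop) (r : I -> I -> Prop) :
  (forall i, ~ r i i) -> (forall i j k, P i -> P j -> P k -> r i j -> r j k -> r i k) ->
  (exists i, P i) -> exists m, P m /\ forall w, P w -> ~ r m w.
Proof.
move=> Hirr Htr [i0 Hi0].
suff : forall s : seq I, (exists i, i \in s /\ P i) ->
    exists m, P m /\ forall w, w \in s -> P w -> ~ r m w.
  move=> /(_ (index_enum I)) [].
    by exists i0; rewrite mem_index_enum.
  by move=> m [Pm Hm]; exists m; split => // w; apply: Hm; rewrite mem_index_enum.
elim=> [[i []] //|x s IH [i [Hi Pi]]].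
case: (classic (exists i, i \in s /\ P i)) => [/IH [m [Pm Hm]]|Hno].
  case: (classic (P x /\ r m x)) => [[Px Hmx]|Hn].
    exists x; split => // w; rewrite in_cons => /orP [/eqP ->|Hw] Pw; first exact: Hirr.
    by move=> Hxw; apply: (Hm w Hw Pw); apply: (Htr m x w).
  exists m; split => // w; rewrite in_cons => /orP [/eqP ->|Hw] Pw; last exact: Hm.
  by move=> H; apply: Hn.
have Px : P x.
  by move: Hi; rewrite in_cons => /orP [/eqP <- //|Hi]; case: Hno; exists i.
exists x; split => // w; rewrite in_cons => /orP [/eqP ->|Hw] Pw; first exact: Hirr.
by case: Hno; exists w.
Qed.

(** * Convex hulls of finite point families *)

Section Hull.
Variables (V : finType) (pos : V -> point R).

Lemma in_hull_vertex v : in_hull pos (pos v).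
Proof.
have delta (f : V -> R) : \sum_w (w == v)%:R * f w = f v.
  rewrite (bigD1 v) //= eqxx mul1r big1 ?addr0 // => w /negbTE ->.
  by rewrite mul0r.
exists (fun w => (w == v)%:R); split; first by move=> w; rewrite ler0n.
split; last by rewrite !delta; case: (pos v).
by rewrite -[RHS](delta (fun=> 1)); apply: eq_bigr => w _; rewrite mulr1.
Qed.

Lemma sum_affine (l : V -> R) (k0 k1 k2 : R) : \sum_v l v = 1 ->
  \sum_v l v * (k0 + k1 * (pos v).1 + k2 * (pos v).2) =
  k0 + k1 * \sum_v l v * (pos v).1 + k2 * \sum_v l v * (pos v).2.
Proof.
move=> H1.
rewrite (eq_bigr (fun v => l v * k0 + k1 * (l v * (pos v).1) + k2 * (l v * (pos v).2)));
  last by move=> v _; ring.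
by rewrite !big_split /= -!mulr_sumr -mulr_suml H1 mul1r.
Qed.

Lemma orient_hull_comb a b (l : V -> R) : \sum_v l v = 1 ->
  orient a b (\sum_v l v * (pos v).1, \sum_v l v * (pos v).2) =
  \sum_v l v * orient a b (pos v).
Proof.
move=> H1; rewrite [RHS](eq_bigr (fun v => l v * (((b.2 - a.2) * a.1 - (b.1 - a.1) * a.2) +
  (-(b.2 - a.2)) * (pos v).1 + (b.1 - a.1) * (pos v).2))); last by move=> v _; rewrite orient_affine.
by rewrite sum_affine // orient_affine.
Qed.

Lemma dotp_hull_comb p a (l : V -> R) : \sum_v l v = 1 ->
  p = (\sum_v l v * (pos v).1, \sum_v l v * (pos v).2) ->
  \sum_v l v * dotp p a (pos v) = 0.
Proof.
move=> H1 Hp.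
rewrite (eq_bigr (fun v => l v * ((- ((a.1 - p.1) * p.1) - (a.2 - p.2) * p.2) +
  (a.1 - p.1) * (pos v).1 + (a.2 - p.2) * (pos v).2))); last by move=> v _; rewrite /dotp; ring.
by rewrite sum_affine //; move: Hp; case: p => p1 p2 [] -> -> /=; ring.
Qed.

Lemma exists_weight_gt0 (l : V -> R) : (forall v, 0 <= l v) -> \sum_v l v = 1 ->
  exists v, 0 < l v.
Proof.
move=> H0 H1; case: (boolP [exists v, 0 < l v]) => [/existsP //|/existsPn H].
have : \sum_v l v = 0 by apply: big1 => v _; apply/eqP; rewrite eq_le H0 andbT leNgt H.
by rewrite H1 => /eqP; rewrite oner_eq0.
Qed.

Lemma in_hull_lerp p q (t : R) : in_hull pos p -> in_hull pos q -> 0 <= t <= 1 ->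
  in_hull pos (lerp p q t).
Proof.
move=> [l [Hl0 [Hl1 ->]]] [m [Hm0 [Hm1 ->]]] /andP [t0 t1].
exists (fun v => (1 - t) * l v + t * m v); split.
  by move=> v; apply: addr_ge0; apply: mulr_ge0 => //; rewrite subr_ge0.
split; first by rewrite /= big_split /= -!mulr_sumr Hl1 Hm1; ring.
by rewrite /lerp /=; congr (_,_); rewrite !mulr_sumr -big_split /=;
  apply: eq_bigr => v _; ring.
Qed.

Lemma in_hull_seg v w z : in_seg (pos v) (pos w) z -> in_hull pos z.
Proof. by case=> t [Ht ->]; apply: in_hull_lerp => //; apply: in_hull_vertex. Qed.

Lemma in_hull_comb (I : finType) (mu : I -> R) (y : I -> point R) :
  (forall i, 0 <= mu i) -> \sum_i mu i = 1 -> (forall i, in_hull pos (y i)) ->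
  in_hull pos (\sum_i mu i * (y i).1, \sum_i mu i * (y i).2).
Proof.
move=> Hm0 Hm1 /(_ _)/constructive_indefinite_description Hy.
pose L i v := sval (Hy i) v.
have HL i : [/\ forall v, 0 <= L i v, \sum_v L i v = 1 &
    y i = (\sum_v L i v * (pos v).1, \sum_v L i v * (pos v).2)].
  by rewrite /L; case: (Hy i) => l [? [? ?]].
have comb (f : V -> R) : \sum_i mu i * (\sum_v L i v * f v) = \sum_v (\sum_i mu i * L i v) * f v.
  rewrite (eq_bigr (fun i => \sum_v mu i * L i v * f v)); last first.
    by move=> i _; rewrite mulr_sumr; apply: eq_bigr => v _; rewrite mulrA.
  by rewrite exchange_big /=; apply: eq_bigr => v _; rewrite mulr_suml.
exists (fun v => \sum_i mu i * L i v); split.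
  by move=> v; apply: sumr_ge0 => i _; apply: mulr_ge0 => //; case: (HL i).
split.
  rewrite -Hm1 [LHS](eq_bigr (fun v => (\sum_i mu i * L i v) * 1)); last first.
    by move=> v _; rewrite mulr1.
  rewrite -comb; apply: eq_bigr => i _; case: (HL i) => _ HLi _.
  by rewrite (eq_bigr (L i) (fun v _ => mulr1 (L i v))) HLi mulr1.
by rewrite -!comb; congr (_,_); apply: eq_bigr => i _; case: (HL i) => _ _ ->.
Qed.

Lemma orient_gt0_neq (j k : V) x : 0 < orient (pos j) (pos k) x -> j != k.
Proof. by apply: contraTneq => ->; rewrite orient_aa ltxx. Qed.

Lemma in_hull_tri (i j k : V) x : 0 < orient (pos j) (pos k) x ->
  0 < orient (pos k) (pos i) x -> 0 < orient (pos i) (pos j) x -> in_hull pos x.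
Proof.
move=> Ha Hb Hc; rewrite (inside_tri_lerp Ha Hb Hc).
rewrite -(orient_sum (pos i) (pos j) (pos k) x).
have l01 (al be : R) : 0 < al -> 0 < be -> 0 <= be / (al + be) <= 1.
  move=> al0 be0; apply/andP; split; first by rewrite divr_ge0 // ltW // addr_gt0.
  by rewrite ler_pdivrMr ?mul1r ?addr_gt0 // lerDr ltW.
apply: in_hull_lerp; first apply: in_hull_lerp; try exact: in_hull_vertex.
- exact: l01.
- by apply: l01 => //; apply: addr_gt0.
Qed.

Lemma interior_hull_tri (i j k : V) x : 0 < orient (pos j) (pos k) x ->
  0 < orient (pos k) (pos i) x -> 0 < orient (pos i) (pos j) x ->
  in_interior (in_hull pos) x.
Proof.
move=> Ha Hb Hc; have [e [e0 He]] := inside_tri_near Ha Hb Hc.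
by exists e; split => // q /He [? ? ?]; apply: (@in_hull_tri i j k).
Qed.

(* [x] beyond [C] (or [D]) would put [C] (or [D]) between the hull points [y] and [x]. *)
Lemma hull_line_in_seg C D x y : orient C D x = 0 -> C != D -> in_seg C D y ->
  in_hull pos x -> in_hull pos y -> ~ in_hull pos C -> ~ in_hull pos D -> in_seg C D x.
Proof.
move=> Hx CD [u [/andP [u0 u1] Ey]] Hhx Hhy NC ND.
pose n := dotp C D D.
have nN : n != 0 by rewrite gt_eqF // dotp_gt0 // eq_sym.
pose s := dotp C x D / n.
have Ex : x = lerp C D s.
  have E1 : n * (x.1 - C.1) = (s * n) * (D.1 - C.1) - orient C D x * (D.2 - C.2).
    by rewrite /s divfK // /n /dotp /orient; ring.
  have E2 : n * (x.2 - C.2) = (s * n) * (D.2 - C.2) + orient C D x * (D.1 - C.1).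
    by rewrite /s divfK // /n /dotp /orient; ring.
  rewrite Hx !mul0r ?subr0 ?addr0 in E1 E2.
  move: E1 E2; clearbody s n => E1 E2.
  rewrite [x]surjective_pairing /lerp /=; congr (_,_); apply: (mulfI nN).
  - by rewrite mulrDr -[n * x.1](addrNK (n * C.1)) -mulrBr E1; ring.
  - by rewrite mulrDr -[n * x.2](addrNK (n * C.2)) -mulrBr E2; ring.
move: Ex; clearbody s => Ex.
case: (lerP 0 s) => s0; last first.
  have us : u - s != 0 by rewrite gt_eqF //; lra.
  case: NC; have -> : C = lerp y x (u / (u - s)).
    by rewrite Ey Ex [C in LHS]surjective_pairing /lerp /=; congr (_,_); field.
  apply: in_hull_lerp => //; apply/andP; split; first by apply: divr_ge0 => //; lra.
  by rewrite ler_pdivrMr ?mul1r; lra.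
case: (lerP s 1) => s1; first by rewrite Ex; apply: in_seg_lerp; rewrite s0 s1.
have us : s - u != 0 by rewrite gt_eqF //; lra.
case: ND; have -> : D = lerp y x ((1 - u) / (s - u)).
  by rewrite Ey Ex [D in LHS]surjective_pairing /lerp /=; congr (_,_); field.
apply: in_hull_lerp => //; apply/andP; split; first by apply: divr_ge0; lra.
by rewrite ler_pdivrMr ?mul1r; lra.
Qed.

Section PointInHull.
Variables (p : point R) (l : V -> R).
Hypotheses (l_ge0 : forall v, 0 <= l v) (l_sum1 : \sum_v l v = 1).
Hypothesis p_comb : p = (\sum_v l v * (pos v).1, \sum_v l v * (pos v).2).
Hypothesis p_off_segs : forall v w, ~ in_seg (pos v) (pos w) p.

Lemma sum_orient_around v : \sum_w l w * orient p (pos v) (pos w) = 0.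
Proof.
by rewrite -orient_hull_comb // -p_comb orient_refl_l.
Qed.

Lemma dotp_around_gt0 v w : orient p (pos v) (pos w) = 0 -> 0 < dotp p (pos v) (pos w).
Proof.
move=> Hc; rewrite ltNge; apply/negP => Hd.
exact: p_off_segs (in_seg_of_dotp Hc Hd).
Qed.

Lemma exists_orient_around_gt0 i : 0 < l i -> exists j, 0 < orient p (pos i) (pos j).
Proof.
move=> Hi; apply: NNPP => HN.
have Hle j : 0 <= - (l j * orient p (pos i) (pos j)).
  rewrite -mulrN mulr_ge0 // oppr_ge0 leNgt; apply/negP => H; apply: HN; by exists j.
have Hz j : l j * orient p (pos i) (pos j) = 0.
  apply: oppr_inj; rewrite oppr0; move: j isT.
  apply: psumr_eq0P => [j _|]; first exact: Hle.
  by rewrite sumrN sum_orient_around oppr0.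
have Hd j : 0 <= l j * dotp p (pos i) (pos j).
  have /eqP := Hz j; rewrite mulf_eq0 => /orP [/eqP ->|/eqP Hc]; first by rewrite mul0r.
  by apply: mulr_ge0 => //; apply: ltW; apply: dotp_around_gt0.
have Hii : l i * dotp p (pos i) (pos i) = 0.
  apply: (@psumr_eq0P _ _ xpredT (fun j => l j * dotp p (pos i) (pos j))) => //.
  exact: dotp_hull_comb.
by move: Hii; apply/eqP; rewrite mulf_neq0 // ?gt_eqF // dotp_around_gt0 // orient_refl_r.
Qed.

Lemma exists_orient_around_max i : 0 < l i -> exists j, 0 < orient p (pos i) (pos j) /\
  forall w, 0 < orient p (pos i) (pos w) -> ~ 0 < orient p (pos j) (pos w).
Proof.
move=> /exists_orient_around_gt0 Hi.
have Hirr v : ~ 0 < orient p (pos v) (pos v) by rewrite orient_refl_r ltxx.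
have Htr u1 u2 u3 : 0 < orient p (pos i) (pos u1) -> 0 < orient p (pos i) (pos u2) ->
    0 < orient p (pos i) (pos u3) -> 0 < orient p (pos u1) (pos u2) ->
    0 < orient p (pos u2) (pos u3) -> 0 < orient p (pos u1) (pos u3).
  move=> Ha Hb Hc Hab Hbc.
  (* Grassmann-Plücker relation *)
  have E : orient p (pos i) (pos u2) * orient p (pos u1) (pos u3) =
    orient p (pos i) (pos u1) * orient p (pos u2) (pos u3) +
    orient p (pos i) (pos u3) * orient p (pos u1) (pos u2) by rewrite /orient; ring.
  have : 0 < orient p (pos i) (pos u2) * orient p (pos u1) (pos u3).
    by rewrite E addr_gt0 // mulr_gt0.
  by rewrite pmulr_rgt0.
have [m [Hm1 Hm2]] := exists_maximal Hirr Htr Hi.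
by exists m; split => // w /Hm2.
Qed.

Lemma exists_orient_around_opposite i j : 0 < l i -> 0 < orient p (pos i) (pos j) ->
  (forall w, 0 < orient p (pos i) (pos w) -> ~ 0 < orient p (pos j) (pos w)) ->
  exists k, orient p (pos i) (pos k) < 0 /\ 0 < orient p (pos j) (pos k).
Proof.
move=> Hi Hj Hjmax; apply: NNPP => HN.
have Hji : orient p (pos j) (pos i) = - orient p (pos i) (pos j) by rewrite /orient; ring.
have Hle m : orient p (pos j) (pos m) <= 0.
  rewrite leNgt; apply/negP => Hm.
  case: (ltgtP (orient p (pos i) (pos m)) 0) => Him.
  - by apply: HN; exists m.
  - exact: (Hjmax m Him).
  - have E : dotp p (pos i) (pos i) * orient p (pos j) (pos m) =
        dotp p (pos i) (pos m) * orient p (pos j) (pos i) +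
        orient p (pos i) (pos m) * dotp p (pos j) (pos i) by rewrite /dotp /orient; ring.
    rewrite Him mul0r addr0 Hji in E.
    have : dotp p (pos i) (pos i) * orient p (pos j) (pos m) < 0.
      by rewrite E mulrN oppr_lt0 mulr_gt0 // dotp_around_gt0.
    by rewrite pmulr_rlt0 ?dotp_around_gt0 ?orient_refl_r // ltNge ltW.
have Hz w : l w * orient p (pos j) (pos w) = 0.
  apply: oppr_inj; rewrite oppr0; move: w isT.
  apply: psumr_eq0P => [w _|]; first by rewrite -mulrN mulr_ge0 // oppr_ge0.
  by rewrite sumrN sum_orient_around oppr0.
by have /eqP := Hz i; rewrite Hji mulf_eq0 oppr_eq0 !gt_eqF.
Qed.

End PointInHull.

Lemma in_hull_inside_triangle p : in_hull pos p -> (forall v w, ~ in_seg (pos v) (pos w) p) ->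
  exists i j k, [/\ 0 < orient (pos j) (pos k) p, 0 < orient (pos k) (pos i) p &
                    0 < orient (pos i) (pos j) p].
Proof.
move=> [l [H0 [H1 Hp]]] Hns.
have [i Hi] := exists_weight_gt0 H0 H1.
have [j [Hj Hjmax]] := exists_orient_around_max H0 H1 Hp Hns Hi.
have [k [Hk1 Hk2]] := exists_orient_around_opposite H0 H1 Hp Hns Hi Hj Hjmax.
exists i, j, k; split; rewrite -orient_rotl //.
by rewrite orient_swapr oppr_gt0.
Qed.

Lemma not_hull_adjacent_sides (a b : V) : general_position pos -> a != b ->
  ~ hull_adjacent pos a b ->
  exists c1 c2 : V, [/\ c1 != a, c1 != b & orient (pos a) (pos b) (pos c1) < 0] /\
    [/\ c2 != a, c2 != b & 0 < orient (pos a) (pos b) (pos c2)].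
Proof.
move=> GP ab HN.
have Hnz w : w != a -> w != b -> orient (pos a) (pos b) (pos w) != 0.
  by move=> wa wb; apply/eqP; apply: (GP a b w) => //; rewrite eq_sym.
have [c1 [c1a c1b Hc1]] : exists c : V, [/\ c != a, c != b & orient (pos a) (pos b) (pos c) < 0].
  apply: NNPP => H; apply: HN; split => //; left => w wa wb.
  by case: (neq0_lt0_gt0 (Hnz w wa wb)) => // Hw; case: H; exists w.
have [c2 [c2a c2b Hc2]] : exists c : V, [/\ c != a, c != b & 0 < orient (pos a) (pos b) (pos c)].
  apply: NNPP => H; apply: HN; split => //; right => w wa wb.
  by case: (neq0_lt0_gt0 (Hnz w wa wb)) => // Hw; case: H; exists w.
by exists c1, c2; split.
Qed.

Section HullCrossing.
Variables q1 q2 : point R.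
Hypothesis q1_off : forall v w, v != w -> orient (pos v) (pos w) q1 != 0.
Hypothesis q2_off : forall v w, v != w -> orient (pos v) (pos w) q2 != 0.
Hypothesis vertices_off : forall v, orient q1 q2 (pos v) != 0.
Hypothesis q2_out : ~ in_hull pos q2.

Lemma later_crossing (a b c : V) (s : R) :
  0 < orient (pos a) (pos b) (pos c) -> 0 < orient (pos a) (pos b) q2 -> 0 <= s <= 1 ->
  in_seg (pos a) (pos b) (lerp q1 q2 s) -> b != c -> c != a ->
  exists (x y : V) (s' : R), [/\ x != y, s < s' <= 1 & in_seg (pos x) (pos y) (lerp q1 q2 s')].
Proof.
move=> Hc Hq2 Hs Hz bc ca.
have Hout : ~ [/\ 0 < orient (pos b) (pos c) q2, 0 < orient (pos c) (pos a) q2 &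
    0 < orient (pos a) (pos b) q2].
  by case=> ? ? ?; apply: q2_out; apply: (@in_hull_tri a b c).
have [s' [Hs' [H|H]]] := cross_beyond_side Hc Hq2 Hs Hz (vertices_off a) (vertices_off b)
  Hout (q2_off bc) (q2_off ca).
- by exists b, c, s'.
- by exists c, a, s'.
Qed.

(* Among the crossings of [q1 q2] with segments between vertices, the one
   closest to [q2] is on a hull edge: otherwise a vertex on the side of [q2]
   yields a later crossing. *)
Lemma cross_hull_edge : general_position pos -> forall (a0 b0 : V) z0, a0 != b0 ->
  in_seg q1 q2 z0 -> in_seg (pos a0) (pos b0) z0 ->
  exists a b : V, hull_adjacent pos a b /\ exists z, in_seg (pos a) (pos b) z /\ in_seg q1 q2 z.
Proof.
move=> GP a0 b0 _ ab0 [s0 [Hs0 ->]] Hz0.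
pose C (ab : V * V) := ab.1 != ab.2 /\
  exists s : R, 0 <= s <= 1 /\ in_seg (pos ab.1) (pos ab.2) (lerp q1 q2 s).
pose F (ab : V * V) := orient (pos ab.1) (pos ab.2) q1 /
  (orient (pos ab.1) (pos ab.2) q1 - orient (pos ab.1) (pos ab.2) q2).
have [[a b] [[/= ab [s [Hs Hz]]] Hmax]] : exists m, C m /\ forall w, C w -> ~ F m < F w.
  apply: (@exists_maximal _ C (fun u w => F u < F w)); first by move=> i; rewrite ltxx.
    by move=> i j k _ _ _; apply: lt_trans.
  by exists (a0, b0); split => //; exists s0.
exists a, b; split; last by exists (lerp q1 q2 s); split => //; apply: in_seg_lerp.
apply: NNPP => Hadj.
have [c1 [c2 [[c1a c1b Hc1] [c2a c2b Hc2]]]] := not_hull_adjacent_sides GP ab Hadj.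
have [x [y [s' [xy /andP [ss' s'1] Hseg]]]] :
    exists (x y : V) (s' : R), [/\ x != y, s < s' <= 1 & in_seg (pos x) (pos y) (lerp q1 q2 s')].
  case: (neq0_lt0_gt0 (q2_off ab)) => Sg.
  - apply: (@later_crossing b a c1) => //; rewrite 1?eq_sym //.
    + by rewrite orient_swap oppr_gt0.
    + by rewrite orient_swap oppr_gt0.
    + exact: in_segC.
  - by apply: (@later_crossing a b c2) => //; rewrite eq_sym.
apply: (Hmax (x, y)).
  split => //; exists s'; split => //; apply/andP; split => //.
  by case/andP: Hs => s0' _; apply: le_trans (ltW ss').
by move: ss'; rewrite (crossing_param (q1_off ab) Hz) (crossing_param (q1_off xy) Hseg).
Qed.

End HullCrossing.

Lemma exit_hull_triangle (i j k : V) x q : 0 < orient (pos j) (pos k) x ->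
  0 < orient (pos k) (pos i) x -> 0 < orient (pos i) (pos j) x -> ~ in_hull pos q ->
  (forall v w, v != w -> orient (pos v) (pos w) q != 0) ->
  exists (v w : V) (s : R), [/\ v != w, 0 < s <= 1 & in_seg (pos v) (pos w) (lerp x q s)].
Proof.
move=> Ha Hb Hc Hq Hoff.
have Hout : ~ [/\ 0 < orient (pos j) (pos k) q, 0 < orient (pos k) (pos i) q &
    0 < orient (pos i) (pos j) q].
  by case=> ? ? ?; apply: Hq; apply: (@in_hull_tri i j k).
have jk := orient_gt0_neq Ha; have ki := orient_gt0_neq Hb; have ij := orient_gt0_neq Hc.
have [s [Hs [H|H|H]]] := exit_triangle Ha Hb Hc Hout (Hoff _ _ jk) (Hoff _ _ ki) (Hoff _ _ ij).
- by exists i, j, s.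
- by exists j, k, s.
- by exists k, i, s.
Qed.

Lemma interior_hull_of_vertices (W : finType) (posW : W -> point R) :
  (forall w, in_interior (in_hull pos) (posW w)) ->
  forall p, in_hull posW p -> in_interior (in_hull pos) p.
Proof.
move=> /(_ _)/constructive_indefinite_description He p [mu [Hm0 [Hm1 Hp]]].
pose E w := sval (He w).
have HE w : 0 < E w /\ forall q, (q.1 - (posW w).1) ^+ 2 + (q.2 - (posW w).2) ^+ 2 < E w ->
    in_hull pos q by rewrite /E; case: (He w).
(* one radius for all vertices, as [(1 + sum_w 1 / E w)^-1 <= E w] *)
pose S := \sum_w (E w)^-1.
have S0 : 0 <= S by apply: sumr_ge0 => w _; rewrite invr_ge0 ltW //; case: (HE w).
exists (1 + S)^-1; split; first by rewrite invr_gt0; lra.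
move=> q Hq.
pose y w : point R := ((posW w).1 + (q.1 - p.1), (posW w).2 + (q.2 - p.2)).
have Hy w : in_hull pos (y w).
  case: (HE w) => Ew0 HEw; apply: HEw; rewrite /y /=.
  rewrite ![(posW w).1 + _ - _]addrC !addKr ![(posW w).2 + _ - _]addrC !addKr.
  apply: (lt_le_trans Hq).
  have Hw : (E w)^-1 <= S.
    rewrite /S (bigD1 w) //= lerDl; apply: sumr_ge0 => v _.
    by rewrite invr_ge0 ltW //; case: (HE v).
  by rewrite -[E w]invrK lef_pV2 ?posrE ?invr_gt0 //; lra.
(* translating the hull of [posW] by [q - p] maps [p] to [q] *)
have -> : q = (\sum_w mu w * (y w).1, \sum_w mu w * (y w).2).
  rewrite /y /= [q in LHS]surjective_pairing; congr (_,_).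
  - rewrite (eq_bigr (fun w => mu w * (posW w).1 + mu w * (q.1 - p.1))); last first.
      by move=> w _; rewrite mulrDr.
    by rewrite big_split /= -mulr_suml Hm1 mul1r Hp /=; ring.
  - rewrite (eq_bigr (fun w => mu w * (posW w).2 + mu w * (q.2 - p.2))); last first.
      by move=> w _; rewrite mulrDr.
    by rewrite big_split /= -mulr_suml Hm1 mul1r Hp /=; ring.
exact: in_hull_comb.
Qed.

Lemma connect_cross_line (e : rel V) C D (a b : V) :
  (forall v, orient C D (pos v) != 0) -> connect e a b ->
  orient C D (pos a) < 0 -> 0 < orient C D (pos b) ->
  exists x, [/\ orient C D x = 0, in_hull pos x & in_tree pos e x].
Proof.
move=> Hoff Hab Ha Hb.
have [r1 [r2 [Er f1 f2]]] := connect_sign_change Hab Ha Hb Hoff.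
have [/andP [t0 t1] Et _] := sign_change_param f2 f1 ltr01 (or_introl ler01).
set t := _ / _ in t0 t1 Et.
have t01 : 0 <= t <= 1 by rewrite !ltW.
exists (lerp (pos r2) (pos r1) t); split.
- by rewrite orient_lerp.
- by apply: in_hull_lerp => //; apply: in_hull_vertex.
- right; exists r1, r2; split => //; apply: in_segC; exact: in_seg_lerp.
Qed.

End Hull.

(** * Two placements in general position *)

Definition hull_edge_blocked (V W : finType) (posV : V -> point R) (posW : W -> point R)
  (eW : rel W) : Prop :=
  exists u v : V, hull_adjacent posV u v /\
    exists p, in_seg (posV u) (posV v) p /\ in_tree posW eW p.

Section TwoPlacements.
Variables (A B : finType) (pa : A -> point R) (pb : B -> point R).
Hypothesis gpA : general_position pa.
Hypothesis offA : forall (b : B) (a1 a2 : A), a1 != a2 -> orient (pa a1) (pa a2) (pb b) != 0.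
Hypothesis offB : forall (a : A) (b1 b2 : B), b1 != b2 -> orient (pb b1) (pb b2) (pa a) != 0.
Hypothesis disjoint_vertices : forall (a : A) (b : B), pa a <> pb b.

Lemma vertex_off_segs (b : B) (v w : A) : ~ in_seg (pa v) (pa w) (pb b).
Proof.
move=> Hs; have [E|vw] := eqVneq v w.
  by rewrite E in Hs; move/esym: (in_seg_same Hs); apply: disjoint_vertices.
by move/eqP: (offA b vw); apply; apply: in_seg_orient0.
Qed.

Lemma interior_hull_of_vertex (b : B) : in_hull pa (pb b) -> in_interior (in_hull pa) (pb b).
Proof.
move=> Hb; have [i [j [k [Ha Hb' Hc]]]] := in_hull_inside_triangle Hb (@vertex_off_segs b).
exact: interior_hull_tri Ha Hb' Hc.
Qed.

Lemma exit_hull_cross_edge (b1 b2 : B) : b1 != b2 -> in_hull pa (pb b1) ->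
  ~ in_hull pa (pb b2) -> exists u v : A, hull_adjacent pa u v /\
    exists z, in_seg (pa u) (pa v) z /\ in_seg (pb b1) (pb b2) z.
Proof.
move=> b12 H1 H2.
have [i [j [k [Ha Hb Hc]]]] := in_hull_inside_triangle H1 (@vertex_off_segs b1).
have [v [w [s [vw /andP [s0 s1] Hs]]]] := exit_hull_triangle Ha Hb Hc H2 (offA b2).
apply: (cross_hull_edge (offA b1) (offA b2) (fun v => offB v b12) H2 gpA vw _ Hs).
by apply: in_seg_lerp; rewrite ltW.
Qed.

Lemma hull_contains_all_vertices (eB : rel B) : (forall u v, connect eB u v) ->
  irreflexive eB -> ~ hull_edge_blocked pa pb eB ->
  (exists b : B, in_hull pa (pb b)) -> forall b : B, in_hull pa (pb b).
Proof.
move=> Hc Hirr HN [b0 Hb0] b.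
have Hstep (x y : B) : eB x y -> in_hull pa (pb x) -> in_hull pa (pb y).
  move=> Exy Hx; apply: NNPP => Hy.
  have xy : x != y by apply: contraTneq Exy => ->; rewrite Hirr.
  have [u [v [Huv [z [Hz1 Hz2]]]]] := exit_hull_cross_edge xy Hx Hy.
  by apply: HN; exists u, v; split => //; exists z; split => //; right; exists x, y.
case/connectP: (Hc b0 b) => pth Hp ->.
elim: pth b0 Hb0 Hp => [|z pth IH] x //= Hx /andP [Hxz Hp].
exact: (IH z (Hstep x z Hxz Hx) Hp).
Qed.

Lemma segment_exits_triangle (i j k : A) x (g1 g2 : B) :
  0 < orient (pa j) (pa k) x -> 0 < orient (pa k) (pa i) x ->
  0 < orient (pa i) (pa j) x -> in_seg (pb g1) (pb g2) x -> ~ in_hull pa (pb g2) ->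
  exists f1 f2 : A, f1 != f2 /\
    exists z, in_seg (pa f1) (pa f2) z /\ in_seg (pb g1) (pb g2) z.
Proof.
move=> Ha Hb Hc [t [/andP [t0 t1] Ex]] H2.
have [v [w [s [vw /andP [s0 s1] Hs]]]] := exit_hull_triangle Ha Hb Hc H2 (offA g2).
exists v, w; split => //; exists (lerp x (pb g2) s); split => //.
rewrite Ex -/(lerp (pb g1) (pb g2) t) lerp_lerp; apply: in_seg_lerp.
by apply/andP; split; nra.
Qed.

Lemma exists_seg_point_in_hull (pb_out : forall b : B, ~ in_hull pa (pb b)) p :
  in_hull pa p -> in_hull pb p ->
  exists (a1 a2 : A) y, in_seg (pa a1) (pa a2) y /\ in_hull pb y.
Proof.
move=> HpA HpB.
case: (classic (exists v w, in_seg (pa v) (pa w) p)) => [[a1 [a2 Hs]]|HnA].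
  by exists a1, a2, p.
have [i [j [k [Ha Hb Hc]]]] := in_hull_inside_triangle HpA
  (fun v w H => HnA (ex_intro _ v (ex_intro _ w H))).
have [l [l0 [l1 _]]] := HpB; have [b _] := exists_weight_gt0 l0 l1.
have [v [w [s [_ /andP [s0 s1] Hs]]]] := exit_hull_triangle Ha Hb Hc (pb_out b) (offA b).
exists v, w, (lerp p (pb b) s); split => //.
apply: in_hull_lerp => //; first exact: in_hull_vertex.
by rewrite s1 andbT ltW.
Qed.

End TwoPlacements.

Section HullsMeet.
Variables (A B : finType) (pa : A -> point R) (pb : B -> point R).
Hypotheses (gpA : general_position pa) (gpB : general_position pb).
Hypothesis offA : forall (b : B) (a1 a2 : A), a1 != a2 -> orient (pa a1) (pa a2) (pb b) != 0.
Hypothesis offB : forall (a : A) (b1 b2 : B), b1 != b2 -> orient (pb b1) (pb b2) (pa a) != 0.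
Hypothesis pa_out : forall a : A, ~ in_hull pb (pa a).
Hypothesis pb_out : forall b : B, ~ in_hull pa (pb b).

Lemma hulls_meet_segments_cross p : in_hull pa p -> in_hull pb p ->
  exists (a1 a2 : A) (b1 b2 : B), [/\ a1 != a2, b1 != b2 &
    exists z, in_seg (pa a1) (pa a2) z /\ in_seg (pb b1) (pb b2) z].
Proof.
move=> HpA HpB.
have [a1 [a2 [y [Hy HyB]]]] := exists_seg_point_in_hull offA pb_out HpA HpB.
have a12 : a1 != a2.
  by apply/eqP => E; rewrite E in Hy; apply: (@pa_out a2); rewrite -(in_seg_same Hy).
case: (classic (exists v w, in_seg (pb v) (pb w) y)) => [[b1 [b2 Hsb]]|HnB].
  exists a1, a2, b1, b2; split => //; last by exists y.
  apply/eqP => E; rewrite E in Hsb; apply: (@pb_out b2); rewrite -(in_seg_same Hsb).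
  exact: in_hull_seg Hy.
have [i [j [k [Ha Hb Hc]]]] :=
  in_hull_inside_triangle HyB (fun v w H => HnB (ex_intro _ v (ex_intro _ w H))).
have [b1 [b2 [b12 [z [Hz1 Hz2]]]]] := segment_exits_triangle offB Ha Hb Hc Hy (@pa_out a2).
by exists a1, a2, b1, b2; split => //; exists z.
Qed.

(* Crossing segments yield a hull edge [cd] of [pb] crossed by a hull edge [ab]
   of [pa]; the tree through [a] and [b] meets the line [cd] inside the hull of
   [pa], hence on the segment [cd]. *)
Lemma hull_edge_blocked_of_hulls_meet (eA : rel A) p : (forall u v, connect eA u v) ->
  in_hull pa p -> in_hull pb p -> hull_edge_blocked pb pa eA.
Proof.
move=> HcA HpA HpB.
have [a1 [a2 [b1 [b2 [a12 b12 [z [Hz1 Hz2]]]]]]] := hulls_meet_segments_cross HpA HpB.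
have [c [d [Hcd [z' [Hz1' Hz2']]]]] :=
  cross_hull_edge (offB a1) (offB a2) (fun v => offA v a12) (@pa_out a2) gpB b12 Hz1 Hz2.
have cd : c != d by case: Hcd.
have [a [b [_ [z'' [Hz1'' Hz2'']]]]] :=
  cross_hull_edge (offA c) (offA d) (fun v => offB v cd) (@pb_out d) gpA a12 Hz1' Hz2'.
have Hoff v : orient (pb c) (pb d) (pa v) != 0 := offB v cd.
have [u [u01 Eu]] := Hz1''.
have Hz0 : (1 - u) * orient (pb c) (pb d) (pa a) + u * orient (pb c) (pb d) (pa b) = 0.
  by rewrite -orient_lerp /lerp -Eu; apply: in_seg_orient0.
have [x [Hx0 HxA HxT]] : exists x, [/\ orient (pb c) (pb d) x = 0, in_hull pa x &
    in_tree pa eA x].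
  case: (lerp_opposite_signs (Hoff a) (Hoff b) u01 Hz0) => [[Ha Hb]|[Ha Hb]].
  - exact: connect_cross_line Hoff (HcA a b) Ha Hb.
  - exact: connect_cross_line Hoff (HcA b a) Hb Ha.
exists c, d; split => //; exists x; split => //.
apply: (hull_line_in_seg Hx0 _ Hz2'' HxA _ (@pb_out c) (@pb_out d)).
- by apply: contraNneq (Hoff a) => ->; rewrite orient_aa.
- exact: in_hull_seg Hz1''.
Qed.

End HullsMeet.

Lemma general_position_join (V W : finType) (f : V -> point R) (g : W -> point R) :
  general_position (join_pos f g) ->
  [/\ general_position f, general_position g,
      forall (w : W) (v1 v2 : V), v1 != v2 -> orient (f v1) (f v2) (g w) != 0 &
      forall (v : V) (w1 w2 : W), w1 != w2 -> orient (g w1) (g w2) (f v) != 0].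
Proof.
move=> GP; split.
- by move=> i j k ij jk ik; apply: (GP (inl i) (inl j) (inl k)).
- by move=> i j k ij jk ik; apply: (GP (inr i) (inr j) (inr k)).
- by move=> w v1 v2 v12; apply/eqP; apply: (GP (inl v1) (inl v2) (inr w)).
- by move=> v w1 w2 w12; apply/eqP; apply: (GP (inr w1) (inr w2) (inl v)).
Qed.

End PlaneGeometry.

Theorem lemma5 (R : realType)
  (V : finType) (posR : V -> point R) (eR : rel V)
  (W : finType) (posS : W -> point R) (eS : rel W) :
  geom_tree posR eR ->
  geom_tree posS eS ->
  general_position (join_pos posR posS) ->
  (forall p, in_tree posR eR p -> ~ in_tree posS eS p) ->
  (exists p, in_hull posR p /\ in_hull posS p) ->
  (forall p, in_hull posR p -> in_interior (in_hull posS) p) \/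
  (forall p, in_hull posS p -> in_interior (in_hull posR) p) \/
  (exists u v : V, hull_adjacent posR u v /\
     exists p, in_seg (posR u) (posR v) p /\ in_tree posS eS p) \/
  (exists u v : W, hull_adjacent posS u v /\
     exists p, in_seg (posS u) (posS v) p /\ in_tree posR eR p).
Proof.
move=> [[_ _ _ irrR] [conR _ _ _]] [[_ _ _ irrS] [conS _ _ _]] GP DJ [p [HpR HpS]].
have [gpR gpS offR offS] := general_position_join GP.
have djRS (r : V) (s : W) : posR r <> posS s.
  by move=> E; apply: (DJ (posR r)); [left; exists r | left; exists s].
have djSR (s : W) (r : V) : posS s <> posR r by move/esym; apply: djRS.
case: (classic (hull_edge_blocked posR posS eS)) => [H|NR]; first by do 2 right; left.
case: (classic (hull_edge_blocked posS posR eR)) => [H|NS]; first by do 3 right.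
case: (classic (exists s, in_hull posR (posS s))) => [Hs|Hns].
  right; left; apply: interior_hull_of_vertices => s.
  apply: (interior_hull_of_vertex offR djRS).
  exact: (hull_contains_all_vertices gpR offR offS djRS conS irrS NR Hs).
case: (classic (exists r, in_hull posS (posR r))) => [Hr|Hnr].
  left; apply: interior_hull_of_vertices => r.
  apply: (interior_hull_of_vertex offS djSR).
  exact: (hull_contains_all_vertices gpS offS offR djSR conR irrR NS Hr).
case: NS; apply: (hull_edge_blocked_of_hulls_meet gpR gpS offR offS _ _ conR HpR HpS).
- by move=> r Hr; apply: Hnr; exists r.
- by move=> s Hs; apply: Hns; exists s.
Qed.
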